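(* For all $a,b\in\mathbb R$, \[\frac{1}{1+|a|}\le\frac{e^{a-b}-1}{a-b}\cdot\frac{1+e^b}{1+e^a},\] where for $a=b$ the factor $\frac{e^{a-b}-1}{a-b}$ is interpreted as $1$. *)

From Stdlib Require Import Reals.
Open Scope R_scope.

Definition expm1_div (t : R) : R :=
  if Req_EM_T t 0 then 1 else (exp t - 1) / t.

(** Write [A t = (e^t - 1)/t].  Since [e^b A(a - b) = e^a A(b - a)], the right-hand side
    equals [(A t + e^a A(-t)) / (1 + e^a)] with [t = a - b], an expression invariant under
    [(a, b) |-> (-a, -b)]; so we may assume [a >= 0].  If [t <= 0], then [A(-t) >= 1] and
    [A t + A(-t) = sinh t / (t/2) >= 2] already give a lower bound [1].  If [0 < t <= a],
    then [A t >= 1] and [A(-t) >= 1/(1 + t) >= 1/(1 + a)].  If [t > a], i.e. [b < 0], the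
    inequality is an explicit one between exponentials, reduced to [e^a >= 1 + a] and
    [sinh s >= s]. *)

From Stdlib Require Import Reals Lra Psatz.
Open Scope R_scope.

Lemma exp_mul_exp_opp (x : R) : exp x * exp (- x) = 1.
Proof. rewrite <- exp_plus, Rplus_opp_r; exact exp_0. Qed.

Lemma cosh_ge1 (x : R) : 1 <= cosh x.
Proof.
  unfold cosh.
  assert (Hy := exp_pos x); assert (Hz := exp_pos (- x)); assert (E := exp_mul_exp_opp x).
  assert (Hsq : 4 <= (exp x + exp (- x)) ^ 2)
    by (assert (D := pow2_ge_0 (exp x - exp (- x))); nra).
  nra.
Qed.

Lemma sinh_ge_id (x : R) : 0 <= x -> x <= sinh x.
Proof.
  intros Hx; destruct (Req_dec x 0) as [->|Hx0].
  { rewrite sinh_0; lra. }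
  destruct (MVT_cor2 sinh cosh 0 x) as [c [Hc _]]; [lra| |].
  { intros c _; apply derivable_pt_lim_sinh. }
  rewrite sinh_0 in Hc; assert (Hcosh := cosh_ge1 c); nra.
Qed.

Lemma exp_sub_exp_opp_ge (x : R) : 0 <= x -> 2 * x <= exp x - exp (- x).
Proof. intros Hx; assert (H := sinh_ge_id x Hx); unfold sinh in H; lra. Qed.

Lemma Rle_div_of_mul (x y t : R) : 0 < t -> x * t <= y -> x <= y / t.
Proof.
  intros Ht H; apply Rmult_le_reg_r with t; [lra|].
  unfold Rdiv; rewrite Rmult_assoc, Rinv_l, Rmult_1_r; lra.
Qed.

Lemma expm1_div_0 : expm1_div 0 = 1.
Proof. unfold expm1_div; destruct (Req_EM_T 0 0); [reflexivity | lra]. Qed.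

Lemma expm1_div_neq0 (t : R) : t <> 0 -> expm1_div t = (exp t - 1) / t.
Proof. intros Ht; unfold expm1_div; destruct (Req_EM_T t 0); [lra | reflexivity]. Qed.

Lemma expm1_div_opp_neq0 (t : R) : t <> 0 -> expm1_div (- t) = (1 - exp (- t)) / t.
Proof. intros Ht; rewrite expm1_div_neq0 by lra; field; lra. Qed.

Lemma expm1_div_opp (t : R) : expm1_div (- t) = exp (- t) * expm1_div t.
Proof.
  destruct (Req_dec t 0) as [->|Ht].
  { rewrite Ropp_0, exp_0, expm1_div_0; ring. }
  rewrite expm1_div_opp_neq0, expm1_div_neq0 by lra.
  rewrite Rmult_div_assoc, Rmult_minus_distr_l, Rmult_comm, exp_mul_exp_opp, Rmult_1_r.
  reflexivity.
Qed.

Lemma expm1_div_ge1 (t : R) : 0 <= t -> 1 <= expm1_div t.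
Proof.
  intros Ht; destruct (Req_dec t 0) as [->|Ht0].
  { rewrite expm1_div_0; lra. }
  rewrite expm1_div_neq0 by lra.
  apply Rle_div_of_mul; [lra|]; assert (H := exp_ineq1_le t); lra.
Qed.

Lemma expm1_div_pos (t : R) : 0 < expm1_div t.
Proof.
  destruct (Rle_or_lt 0 t) as [Ht|Ht].
  - assert (H := expm1_div_ge1 t Ht); lra.
  - rewrite <- (Ropp_involutive t), expm1_div_opp.
    assert (H := expm1_div_ge1 (- t)); assert (Hp := exp_pos (- - t)); nra.
Qed.

Lemma expm1_div_opp_ge (t : R) : 0 <= t -> 1 <= (1 + t) * expm1_div (- t).
Proof.
  intros Ht; destruct (Req_dec t 0) as [->|Ht0].
  { rewrite Ropp_0, expm1_div_0; lra. }
  rewrite expm1_div_opp_neq0, Rmult_div_assoc by lra.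
  apply Rle_div_of_mul; [lra|].
  assert (H := Rmult_le_compat_r _ _ _ (Rlt_le _ _ (exp_pos (- t))) (exp_ineq1_le t)).
  rewrite exp_mul_exp_opp in H; lra.
Qed.

Lemma expm1_div_add_opp_ge (t : R) : 2 <= expm1_div t + expm1_div (- t).
Proof.
  assert (Hnonneg : forall u, 0 <= u -> 2 <= expm1_div u + expm1_div (- u)).
  { intros u Hu; destruct (Req_dec u 0) as [->|Hu0].
    { rewrite Ropp_0, expm1_div_0; lra. }
    rewrite expm1_div_neq0, expm1_div_opp_neq0, <- Rdiv_plus_distr by lra.
    apply Rle_div_of_mul; [lra|]; assert (H := exp_sub_exp_opp_ge u Hu); lra. }
  destruct (Rle_or_lt 0 t) as [Ht|Ht]; [auto|].
  assert (H := Hnonneg (- t) ltac:(lra)); rewrite Ropp_involutive in H; lra.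
Qed.

Lemma expm1_div_mul_one_add_exp (a b : R) :
  expm1_div (a - b) * (1 + exp b) = expm1_div (a - b) + exp a * expm1_div (b - a).
Proof.
  replace (b - a) with (- (a - b)) by ring.
  rewrite expm1_div_opp, <- Rmult_assoc, <- exp_plus.
  replace (a + - (a - b)) with b by ring; ring.
Qed.

Lemma expm1_div_mul_one_add_exp_opp (a b : R) :
  expm1_div (- a - - b) * (1 + exp (- b)) = exp (- a) * (expm1_div (a - b) * (1 + exp b)).
Proof.
  rewrite !expm1_div_mul_one_add_exp.
  replace (- a - - b) with (b - a) by ring; replace (- b - - a) with (a - b) by ring.
  rewrite Rmult_plus_distr_l, <- Rmult_assoc, (Rmult_comm (exp (- a)) (exp a)), exp_mul_exp_opp.
  ring.
Qed.

Lemma one_add_exp_le_of_neg (a b : R) : 0 <= a -> b < 0 ->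
  (a - b) * (1 + exp a) <= (1 + a) * ((exp (a - b) - 1) * (1 + exp b)).
Proof.
  intros Ha Hb; set (s := - b); assert (Hs : 0 < s) by (unfold s; lra).
  replace b with (- s) by (unfold s; ring); replace (a - - s) with (a + s) by ring.
  rewrite exp_plus.
  assert (Es := exp_ineq1_le s); assert (Sinh := exp_sub_exp_opp_ge s (Rlt_le _ _ Hs)).
  assert (Pa := exp_pos a); assert (Ps := exp_pos s); assert (Pns := exp_pos (- s)).
  set (C := (1 + a) * exp s + 1 - s).
  assert (Hexpand :
    (1 + a) * ((exp a * exp s - 1) * (1 + exp (- s))) - (a + s) * (1 + exp a)
    = exp a * C - (1 + 2 * a + s) - (1 + a) * exp (- s)
      + (1 + a) * exp a * (exp s * exp (- s) - 1)) by (unfold C; ring).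
  rewrite exp_mul_exp_opp, Rminus_diag, Rmult_0_r, Rplus_0_r in Hexpand.
  assert (HC : 0 <= C) by (unfold C; nra).
  assert (Hea : (1 + a) * C <= exp a * C)
    by (apply Rmult_le_compat_r; [exact HC | apply exp_ineq1_le]).
  assert (Hrest : 0 <= a * ((2 + a) * exp s - exp (- s) - 1 - s))
    by (apply Rmult_le_pos; nra).
  (* [(1 + a) C - (1 + 2a + s) - (1 + a) e^-s = (e^s - e^-s - 2s) + a ((2 + a) e^s - e^-s - 1 - s)] *)
  unfold C in *; nra.
Qed.

Lemma one_add_exp_le_nonneg (a b : R) : 0 <= a ->
  1 + exp a <= (1 + a) * (expm1_div (a - b) * (1 + exp b)).
Proof.
  intros Ha; assert (Ea := exp_ineq1_le a).
  assert (Px := expm1_div_pos (a - b)); assert (Py := expm1_div_pos (b - a)).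
  destruct (Rle_or_lt a b) as [Hab|Hab]; [|destruct (Rle_or_lt 0 b) as [Hb|Hb]].
  - rewrite expm1_div_mul_one_add_exp.
    assert (Hy := expm1_div_ge1 (b - a) ltac:(lra)).
    assert (Hsum := expm1_div_add_opp_ge (a - b)).
    replace (- (a - b)) with (b - a) in Hsum by ring.
    assert (Hmix := Rmult_le_pos (exp a - 1) (expm1_div (b - a) - 1) ltac:(lra) ltac:(lra)).
    assert (HQ : 1 + exp a <= expm1_div (a - b) + exp a * expm1_div (b - a)) by nra.
    assert (HaQ : 0 <= a * (expm1_div (a - b) + exp a * expm1_div (b - a)))
      by (apply Rmult_le_pos; [exact Ha | assert (Pa := exp_pos a); lra]).
    lra.
  - rewrite expm1_div_mul_one_add_exp.
    assert (Hx := expm1_div_ge1 (a - b) ltac:(lra)).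
    assert (Hy := expm1_div_opp_ge (a - b) ltac:(lra)).
    replace (- (a - b)) with (b - a) in Hy by ring.
    assert (Hy' : 1 <= (1 + a) * expm1_div (b - a)) by nra.
    assert (Hey := Rmult_le_compat_l (exp a) _ _ (Rlt_le _ _ (exp_pos a)) Hy').
    nra.
  - rewrite expm1_div_neq0 by lra.
    assert (H := one_add_exp_le_of_neg a b Ha Hb).
    apply Rmult_le_reg_r with (a - b); [lra|].
    replace ((1 + a) * ((exp (a - b) - 1) / (a - b) * (1 + exp b)) * (a - b))
      with ((1 + a) * ((exp (a - b) - 1) * (1 + exp b))) by (field; lra).
    lra.
Qed.

Lemma one_add_exp_le (a b : R) :
  1 + exp a <= (1 + Rabs a) * (expm1_div (a - b) * (1 + exp b)).
Proof.
  destruct (Rle_or_lt 0 a) as [Ha|Ha].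
  - rewrite Rabs_pos_eq by lra; apply one_add_exp_le_nonneg; lra.
  - rewrite Rabs_left by lra.
    assert (H := one_add_exp_le_nonneg (- a) (- b) ltac:(lra)).
    rewrite expm1_div_mul_one_add_exp_opp in H.
    assert (E := exp_mul_exp_opp a); assert (Pa := exp_pos a).
    assert (Hm := Rmult_le_compat_l (exp a) _ _ (Rlt_le _ _ Pa) H).
    nra.
Qed.

Theorem lemma4 (a b : R) :
  1 / (1 + Rabs a) <= expm1_div (a - b) * ((1 + exp b) / (1 + exp a)).
Proof.
  assert (H := one_add_exp_le a b).
  assert (Pa := exp_pos a); assert (Habs := Rabs_pos a).
  replace (expm1_div (a - b) * ((1 + exp b) / (1 + exp a)))
    with (expm1_div (a - b) * (1 + exp b) / (1 + exp a)) by (field; lra).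
  apply Rmult_le_reg_r with ((1 + Rabs a) * (1 + exp a)); [nra|].
  field_simplify; lra.
Qed.
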